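(* In the setting described in the context, assume that the maximal edge length is sufficiently small and that the coefficients $C_{\vec n}$ and $C_{\vec m}$ are constant on each edge. Then for all $(\vec\lambda,\vec\phi)\in V_{\vec\lambda}\times V_{\vec\lambda}$, \[ L(\vec\lambda,\vec\lambda)+L(\vec\phi,\vec\phi)\lesssim A((\vec\lambda,\vec\phi),(\vec\lambda,\vec\phi))\lesssim L(\vec\lambda,\vec\lambda)+L(\vec\phi,\vec\phi), \] where the hidden constants depend only on the reciprocal of \[ \lambda_{\min}=\min_{\vec\mu\in V_{\vec\lambda}\setminus\{0\}}\frac{L(\vec\mu,\vec\mu)}{M(\vec\mu,\vec\mu)}. \]
   Context: $\mathcal G=(\mathcal N,\mathcal E)$ is a finite connected graph embedded in $\mathbb R^3$: nodes are distinct points, each edge $\mathfrak e$ is the straight segment joining two distinct nodes $\mathfrak n_k,\mathfrak n_\ell$ ($k<\ell$), with length $h_{\mathfrak e}$, direction $\vec i_{\mathfrak e}=(\mathfrak n_\ell-\mathfrak n_k)/h_{\mathfrak e}$, scalar normals $\nu_{\mathfrak e}(\mathfrak n_k)=-1$, $\nu_{\mathfrak e}(\mathfrak n_\ell)=+1$; $x$ is arclength on $\mathfrak e$ increasing along $\vec i_{\mathfrak e}$, $\partial_x$ its derivative, $\times$ the cross product. $C_{\vec n},C_{\vec m}$ are symmetric $\mathbb R^{3\times3}$-valued coefficients with uniform bounds $\alpha_{\vec n}|\xi|^2\le(C_{\vec n}\xi)\cdot\xi\le\beta_{\vec n}|\xi|^2$, $\alpha_{\vec m}|\xi|^2\le(C_{\vec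 m}\xi)\cdot\xi\le\beta_{\vec m}|\xi|^2$ ($0<\alpha,\beta<\infty$), and for each edge there is a right-handed orthonormal basis $\{\vec i_{\mathfrak e},\vec j_{\mathfrak e},\vec k_{\mathfrak e}\}$ (principal axes of the beam cross section) in which $C_{\vec n}$ and $C_{\vec m}$ are diagonal. $(\vec v,\vec w)_{\mathfrak e}=\int_{\mathfrak e}\vec v\cdot\vec w\,\mathrm d\sigma$; $\langle\vec a,\vec b\rangle_{\mathfrak e}=\sum_{\mathfrak n\text{ endpoint of }\mathfrak e}\vec a(\mathfrak n)\cdot\vec b(\mathfrak n)$, also for nodal quantities. Local solver: for an edge $\mathfrak e$ and nodal data $\vec u_{\mathfrak n},\vec r_{\mathfrak n}\in\mathbb R^3$ at its endpoints, $\vec N_{\mathfrak e}(\vec u_{\mathfrak n},\vec r_{\mathfrak n}),\vec M_{\mathfrak e}(\vec u_{\mathfrak n},\vec r_{\mathfrak n})$ denote the components $\vec n_{\mathfrak e},\vec m_{\mathfrak e}\in(H^1(\mathfrak e))^3$ of the unique $\vec u_{\mathfrak e},\vec r_{\mathfrak e}\in(L^2(\mathfrak e))^3$, $\vec n_{\mathfrak e},\vec m_{\mathfrak e}\in(H^1(\mathfrak e))^3$ with, for all $\vec p,\vec q\in(H^1(\mathfrak e))^3$, $\vec v,\vec w\in(L^2(\mathfrak e))^3$: $-(C_{\vec n}^{-1}\vec n_{\mathfrak e},\vec p)_{\mathfrak e}+(\vec u_{\mathfrak e},\partial_x\vec p)_{\mathfrak e}-(\vec i_{\mathfrak e}\times\vec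 r_{\mathfrak e},\vec p)_{\mathfrak e}=\langle\vec u_{\mathfrak n},\vec p\nu_{\mathfrak e}\rangle_{\mathfrak e}$; $-(C_{\vec m}^{-1}\vec m_{\mathfrak e},\vec q)_{\mathfrak e}+(\vec r_{\mathfrak e},\partial_x\vec q)_{\mathfrak e}=\langle\vec r_{\mathfrak n},\vec q\nu_{\mathfrak e}\rangle_{\mathfrak e}$; $(\partial_x\vec n_{\mathfrak e},\vec v)_{\mathfrak e}=0$; $(\vec i_{\mathfrak e}\times\vec n_{\mathfrak e},\vec w)_{\mathfrak e}+(\partial_x\vec m_{\mathfrak e},\vec w)_{\mathfrak e}=0$. A nonempty set $\mathcal N_{\mathrm D}\subset\mathcal N$ of Dirichlet nodes is fixed and $V_{\vec\lambda}$ is the space of maps $\vec\lambda:\mathcal N\to\mathbb R^3$ with $\vec\lambda_{\mathfrak n}=0$ for $\mathfrak n\in\mathcal N_{\mathrm D}$. With $[\![q_{\mathfrak e}]\!]_{\mathfrak n}=\sum_{\mathfrak e\text{ adjacent to }\mathfrak n}q_{\mathfrak e}(\mathfrak n)$, define $A((\vec\lambda,\vec\phi),(\vec\mu,\vec\psi))=-\sum_{\mathfrak n\in\mathcal N\setminus\mathcal N_{\mathrm D}}\big[[\![\vec N_{\mathfrak e}(\vec\lambda_{\mathfrak n},\vec\phi_{\mathfrak n})\nu_{\mathfrak e}]\!]_{\mathfrak n}\cdot\vec\mu_{\mathfrak n}+[\![\vec M_{\mathfrak e}(\vec\lambda_{\mathfrak n},\vec\phi_{\mathfrak n})\nu_{\mathfrak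 e}]\!]_{\mathfrak n}\cdot\vec\psi_{\mathfrak n}\big]$, where the local solver on $\mathfrak e$ is fed the values of $\vec\lambda,\vec\phi$ at the endpoints of $\mathfrak e$. For $\vec\lambda,\vec\mu\in V_{\vec\lambda}$ define $M(\vec\lambda,\vec\mu)=\sum_{\mathfrak n\in\mathcal N}\frac12\sum_{\mathfrak e\text{ adjacent to }\mathfrak n}h_{\mathfrak e}\,\vec\lambda_{\mathfrak n}\cdot\vec\mu_{\mathfrak n}$ and $L(\vec\lambda,\vec\mu)=\sum_{\mathfrak n\in\mathcal N}\frac12\sum_{\mathfrak e=(\mathfrak n,\mathfrak n')\text{ adjacent to }\mathfrak n}\frac{(\vec\lambda_{\mathfrak n}-\vec\lambda_{\mathfrak n'})\cdot(\vec\mu_{\mathfrak n}-\vec\mu_{\mathfrak n'})}{h_{\mathfrak e}}$. Notation $a\lesssim b$: $a\le Cb$ with $C>0$ possibly depending on the coefficients $C_{\vec n},C_{\vec m}$ but independent of the edge lengths. *)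

From HB Require Import structures.
From mathcomp Require Import all_boot all_order all_algebra.
From mathcomp Require Import all_classical all_reals all_analysis.
Set Implicit Arguments. Unset Strict Implicit. Unset Printing Implicit Defensive.
Import Order.TTheory GRing.Theory Num.Theory.
Local Open Scope ring_scope.
Local Open Scope classical_set_scope.

Definition dotv {R : nzRingType} (a b : 'rV[R]_3) : R := \sum_(i < 3) a 0 i * b 0 i.

Definition crossv {R : nzRingType} (a b : 'rV[R]_3) : 'rV[R]_3 :=
  let c (v : 'rV[R]_3) (k : nat) := v 0 (inord k) in
  \row_(i < 3) (match val i with
                | O => c a 1%N * c b 2%N - c a 2%N * c b 1%N
                | S O => c a 2%N * c b 0%N - c a 0%N * c b 2%N
                | _ => c a 0%N * c b 1%N - c a 1%N * c b 0%N end).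

Definition normv {R : rcfType} (a : 'rV[R]_3) : R := Num.sqrt (dotv a a).

(* ---------- functions on an edge, parametrized by arclength x in [0,h] ---------- *)
Definition Rint {R : realType} (a b : R) (f : R -> R) : R :=
  Rintegral (@lebesgue_measure R) `[a, b] f.

Definition L2 {R : realType} (h : R) (f : R -> 'rV[R]_3) : Prop :=
  forall i : 'I_3,
    measurable_fun `[0, h] (fun x => f x 0 i) /\
    (@lebesgue_measure R).-integrable `[0, h] (fun x => ((f x 0 i) ^+ 2)%:E).

(* p is (the continuous representative of) an element of (H^1(e))^3 with
   (weak) derivative dp : p x = p 0 + int_0^x dp, dp in L^2. *)
Definition H1d {R : realType} (h : R) (p dp : R -> 'rV[R]_3) : Prop :=
  L2 h dp /\
  forall x, 0 <= x <= h -> forall i : 'I_3, p x 0 i = p 0 0 i + Rint 0 x (fun t => dp t 0 i).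

Definition ipe {R : realType} (h : R) (v w : R -> 'rV[R]_3) : R :=
  \sum_(i < 3) Rint 0 h (fun x => v x 0 i * w x 0 i).

(* Local solver on an edge of length h, direction ie, constant coefficients Cn Cm,
   nodal data (uk, rk) at the first node n_k (x = 0, nu = -1) and (ul, rl) at the
   second node n_l (x = h, nu = +1); unknowns u r in L^2, n m in H^1. *)
Definition local_sol {R : realType} (h : R) (ie : 'rV[R]_3) (Cn Cm : 'M[R]_3)
  (uk ul rk rl : 'rV[R]_3) (u r n m : R -> 'rV[R]_3) : Prop :=
  L2 h u /\ L2 h r /\
  exists dn dm, H1d h n dn /\ H1d h m dm /\
  (forall p dp, H1d h p dp ->
     - ipe h (fun x => n x *m invmx Cn) p + ipe h u dp
     - ipe h (fun x => crossv ie (r x)) p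
     = - dotv uk (p 0) + dotv ul (p h)) /\
  (forall q dq, H1d h q dq ->
     - ipe h (fun x => m x *m invmx Cm) q + ipe h r dq
     = - dotv rk (q 0) + dotv rl (q h)) /\
  (forall v, L2 h v -> ipe h dn v = 0) /\
  (forall w, L2 h w -> ipe h (fun x => crossv ie (n x)) w + ipe h dm w = 0).

Definition adj {nN nE : nat} (ends : 'I_nE -> 'I_nN * 'I_nN) : rel 'I_nN :=
  fun a b => [exists e, (ends e == (a, b)) || (ends e == (b, a))].

Definition graph_ok {R : nzRingType} {nN nE : nat} (pos : 'I_nN -> 'rV[R]_3)
  (ends : 'I_nE -> 'I_nN * 'I_nN) : Prop :=
  injective pos /\ injective ends /\
  (forall e, ((ends e).1 < (ends e).2)%N) /\
  (forall a b, connect (adj ends) a b).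

Definition edge_len {R : rcfType} {nN nE : nat} (pos : 'I_nN -> 'rV[R]_3)
  (ends : 'I_nE -> 'I_nN * 'I_nN) (e : 'I_nE) : R :=
  normv (pos (ends e).2 - pos (ends e).1).

Definition edge_dir {R : rcfType} {nN nE : nat} (pos : 'I_nN -> 'rV[R]_3)
  (ends : 'I_nE -> 'I_nN * 'I_nN) (e : 'I_nE) : 'rV[R]_3 :=
  (edge_len pos ends e)^-1 *: (pos (ends e).2 - pos (ends e).1).

(* symmetric coefficient with bounds a|xi|^2 <= (C xi).xi <= b|xi|^2, diagonal in a
   right-handed orthonormal basis {ie, j, k} *)
Definition coef_ok {R : realType} (a b : R) (ie : 'rV[R]_3) (C : 'M[R]_3) : Prop :=
  C^T = C /\
  (forall xi : 'rV[R]_3, a * dotv xi xi <= dotv (xi *m C) xi <= b * dotv xi xi) /\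
  exists j k : 'rV[R]_3,
    dotv j j = 1 /\ dotv k k = 1 /\ dotv ie j = 0 /\ dotv ie k = 0 /\ dotv j k = 0 /\
    crossv ie j = k /\
    dotv (ie *m C) j = 0 /\ dotv (ie *m C) k = 0 /\ dotv (j *m C) k = 0.

Definition inV {R : nzRingType} {nN : nat} (ND : {set 'I_nN}) (lam : 'I_nN -> 'rV[R]_3) :=
  forall a, a \in ND -> lam a = 0.

Definition Mform {R : rcfType} {nN nE : nat} (pos : 'I_nN -> 'rV[R]_3)
  (ends : 'I_nE -> 'I_nN * 'I_nN) (lam mu : 'I_nN -> 'rV[R]_3) : R :=
  \sum_(a < nN) 2^-1 * \sum_(e < nE | ((ends e).1 == a) || ((ends e).2 == a))
      edge_len pos ends e * dotv (lam a) (mu a).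

Definition other {nN nE : nat} (ends : 'I_nE -> 'I_nN * 'I_nN) (e : 'I_nE) (a : 'I_nN) :=
  if (ends e).1 == a then (ends e).2 else (ends e).1.

Definition Lform {R : rcfType} {nN nE : nat} (pos : 'I_nN -> 'rV[R]_3)
  (ends : 'I_nE -> 'I_nN * 'I_nN) (lam mu : 'I_nN -> 'rV[R]_3) : R :=
  \sum_(a < nN) 2^-1 * \sum_(e < nE | ((ends e).1 == a) || ((ends e).2 == a))
      dotv (lam a - lam (other ends e a)) (mu a - mu (other ends e a))
        / edge_len pos ends e.

(* [[ q_e nu_e ]]_a, given the values q_e(n_k) = f0 e (at x = 0) and q_e(n_l) = fh e *)
Definition jumpn {R : nzRingType} {nN nE : nat} (ends : 'I_nE -> 'I_nN * 'I_nN)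
  (f0 fh : 'I_nE -> 'rV[R]_3) (a : 'I_nN) : 'rV[R]_3 :=
  \sum_(e < nE) ((if (ends e).2 == a then fh e else 0) - (if (ends e).1 == a then f0 e else 0)).

(* A((lam,phi),(mu,psi)) computed from the endpoint values of the local solutions
   N_e(lam,phi), M_e(lam,phi) *)
Definition Aform {R : nzRingType} {nN nE : nat} (ends : 'I_nE -> 'I_nN * 'I_nN)
  (ND : {set 'I_nN}) (N0 Nh M0 Mh : 'I_nE -> 'rV[R]_3) (mu psi : 'I_nN -> 'rV[R]_3) : R :=
  - \sum_(a < nN | a \notin ND)
      (dotv (jumpn ends N0 Nh a) (mu a) + dotv (jumpn ends M0 Mh a) (psi a)).

Definition lam_min {R : realType} {nN nE : nat} (pos : 'I_nN -> 'rV[R]_3)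
  (ends : 'I_nE -> 'I_nN * 'I_nN) (ND : {set 'I_nN}) : R :=
  inf [set Lform pos ends mu mu / Mform pos ends mu mu
      | mu in [set mu | inV ND mu /\ mu <> (fun _ => 0)]].

From Pilot Require Import Defs.
From HB Require Import structures.
From mathcomp Require Import all_boot all_order all_algebra.
From mathcomp Require Import all_classical all_reals all_analysis.
From mathcomp Require Import measurable_realfun ring lra.
Set Implicit Arguments. Unset Strict Implicit. Unset Printing Implicit Defensive.
Import Order.TTheory GRing.Theory Num.Theory.
Local Open Scope ring_scope.
Local Open Scope classical_set_scope.

(* On each edge the local solver is explicit: testing the weak equations with
   indicator functions shows that n is a constant N and m(x) = M - x i×N, and
   testing with constants and with x ↦ x c expresses the jumps Δr and Δu + h i×r
   through C_m^-1 and C_n^-1 applied to N and M.  The edge's share of A is then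
   the compliance energy h C_n^-1 N·N + ∫_0^h C_m^-1 m·m, and for h ≤ 1 these
   formulas bound it above by |Δλ|²/h + |Δφ|²/h + h|φ|² and below by
   (|Δφ|² + |Δλ + h i×φ|²)/h, with constants depending only on the coefficient
   bounds.  Summed over the edges, the terms h|φ|² give at most
   2 M(φ,φ) ≤ 2 λ_min^-1 L(φ,φ), and λ_min > 0 by a discrete Poincaré inequality,
   since the graph is connected and has a Dirichlet node. *)

(* Unqualified, [Rint] would denote MathComp's [Num.Rint]. *)
Local Notation Rint := Defs.Rint.

(** * Vectors of R^3 *)

Local Notation coord v k := (v 0%R (@inord 2 k)).

Section VectorAlgebra.
Variable R : comNzRingType.
Implicit Types (a b c : 'rV[R]_3) (s : R).

Lemma dotvE a b :
  dotv a b = coord a 0 * coord b 0 + coord a 1 * coord b 1 + coord a 2 * coord b 2.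
Proof.
rewrite /dotv !big_ord_recr big_ord0 /= add0r.
by congr (_ + _ + _); congr (_ * _); congr (_ _ _); apply/val_inj; rewrite /= inordK.
Qed.

Lemma crossv_coord0 a b : coord (crossv a b) 0 = coord a 1 * coord b 2 - coord a 2 * coord b 1.
Proof. by rewrite mxE /= inordK. Qed.

Lemma crossv_coord1 a b : coord (crossv a b) 1 = coord a 2 * coord b 0 - coord a 0 * coord b 2.
Proof. by rewrite mxE /= inordK. Qed.

Lemma crossv_coord2 a b : coord (crossv a b) 2 = coord a 0 * coord b 1 - coord a 1 * coord b 0.
Proof. by rewrite mxE /= inordK. Qed.

Let coordE := (crossv_coord0, crossv_coord1, crossv_coord2, mxE).

Lemma crossv_ordS a b (j : 'I_3) :
  crossv a b 0 j = a 0 (ordS j) * b 0 (ordS (ordS j)) - a 0 (ordS (ordS j)) * b 0 (ordS j).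
Proof.
rewrite mxE; case: j => -[|[|[|//]]] lt_j3 /=;
by congr (_ * _ - _ * _); congr (_ _ _); apply/val_inj; rewrite /= inordK.
Qed.

Lemma dotvC a b : dotv a b = dotv b a.
Proof. by rewrite !dotvE; ring. Qed.

Lemma dotvDl a b c : dotv (a + b) c = dotv a c + dotv b c.
Proof. by rewrite !dotvE !coordE; ring. Qed.

Lemma dotvNl a b : dotv (- a) b = - dotv a b.
Proof. by rewrite !dotvE !coordE; ring. Qed.

Lemma dotvZl s a b : dotv (s *: a) b = s * dotv a b.
Proof. by rewrite !dotvE !coordE; ring. Qed.

Lemma dotv0l a : dotv 0 a = 0.
Proof. by rewrite !dotvE !coordE; ring. Qed.

Lemma dotvBl a b c : dotv (a - b) c = dotv a c - dotv b c.
Proof. by rewrite dotvDl dotvNl. Qed.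

Lemma dotvDr a b c : dotv a (b + c) = dotv a b + dotv a c.
Proof. by rewrite dotvC dotvDl !(dotvC a). Qed.

Lemma dotvNr a b : dotv a (- b) = - dotv a b.
Proof. by rewrite dotvC dotvNl dotvC. Qed.

Lemma dotvZr s a b : dotv a (s *: b) = s * dotv a b.
Proof. by rewrite dotvC dotvZl dotvC. Qed.

Lemma dotv0r a : dotv a 0 = 0.
Proof. by rewrite dotvC dotv0l. Qed.

Lemma dotvBr a b c : dotv a (b - c) = dotv a b - dotv a c.
Proof. by rewrite dotvDr dotvNr. Qed.

Definition dotv_linE :=
  (dotvDl, dotvDr, dotvNl, dotvNr, dotvZl, dotvZr, dotv0l, dotv0r).

Lemma dotv_mulmx a b (A : 'M[R]_3) : dotv (a *m A) b = dotv a (b *m A^T).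
Proof.
rewrite /dotv; under eq_bigr do rewrite mxE big_distrl.
rewrite exchange_big; apply: eq_bigr => j _; rewrite mxE big_distrr.
by apply: eq_bigr => i _; rewrite !mxE /= -!mulrA [A j i * _]mulrC.
Qed.

Lemma crossvC a b : crossv a b = - crossv b a.
Proof.
by apply/rowP => j; rewrite [RHS]mxE !crossv_ordS; ring.
Qed.

Lemma crossvDr a b c : crossv a (b + c) = crossv a b + crossv a c.
Proof. by apply/rowP => j; rewrite crossv_ordS [RHS]mxE !crossv_ordS !mxE; ring. Qed.

Lemma crossvZr s a b : crossv a (s *: b) = s *: crossv a b.
Proof. by apply/rowP => j; rewrite crossv_ordS [RHS]mxE !crossv_ordS !mxE; ring. Qed.

Lemma dotv_crossvA a b c : dotv a (crossv b c) = dotv (crossv a b) c.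
Proof. by rewrite !dotvE !coordE; ring. Qed.

Lemma dotv_crossv_lagrange a b :
  dotv (crossv a b) (crossv a b) = dotv a a * dotv b b - dotv a b ^+ 2.
Proof. by rewrite !dotvE !coordE; ring. Qed.

End VectorAlgebra.

Section VectorInequalities.
Variable R : realDomainType.
Implicit Types (a b c : 'rV[R]_3).

Lemma dotv_ge0 a : 0 <= dotv a a.
Proof. by rewrite dotvE -!expr2 !addr_ge0 ?sqr_ge0. Qed.

Lemma dotv_eq0 a : (dotv a a == 0) = (a == 0).
Proof.
apply/eqP/eqP => [|->]; last exact: dotv0l.
rewrite dotvE -!expr2 => sum_sq0.
have s0 := sqr_ge0 (coord a 0); have s1 := sqr_ge0 (coord a 1); have s2 := sqr_ge0 (coord a 2).
have coord_eq0 k : (k <= 2)%N -> coord a k = 0.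
  move=> le_k2; apply/eqP; rewrite -sqrf_eq0 eq_le sqr_ge0 andbT.
  by case: k le_k2 => [|[|[|?]]] //; lra.
apply/rowP => j; rewrite mxE -(inord_val j) coord_eq0 //.
by rewrite -ltnS ltn_ord.
Qed.

Lemma dotv_gt0 a : a != 0 -> 0 < dotv a a.
Proof. by rewrite lt_def dotv_ge0 dotv_eq0 andbT. Qed.

Lemma dotv_inj a b : (forall c, dotv a c = dotv b c) -> a = b.
Proof.
by move=> eq_ab; apply/eqP; rewrite -subr_eq0 -dotv_eq0 dotvBl eq_ab subrr.
Qed.

Lemma dotv_young a b (k : R) : 2 * k * dotv a b <= k ^+ 2 * dotv a a + dotv b b.
Proof. by have := dotv_ge0 (k *: a - b); rewrite !(dotvBl, dotvBr, dotv_linE) (dotvC b a); nra. Qed.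

Lemma dotv_sqD_le a b : dotv (a + b) (a + b) <= 2 * dotv a a + 2 * dotv b b.
Proof.
by have := dotv_young a b 1; rewrite !dotv_linE expr1n (dotvC b a); lra.
Qed.

Lemma dotv_crossv_le a b : dotv a a = 1 -> dotv (crossv a b) (crossv a b) <= dotv b b.
Proof. by move=> a1; rewrite dotv_crossv_lagrange a1 mul1r lerBlDr lerDl sqr_ge0. Qed.

End VectorInequalities.

Definition compliance (R : comUnitRingType) (C : 'M[R]_3) (xi eta : 'rV[R]_3) : R :=
  dotv (xi *m invmx C) eta.

Section Compliance.
Variables (R : realFieldType) (al be : R) (C : 'M[R]_3).
Hypotheses (al_gt0 : 0 < al) (C_sym : C^T = C).
Hypothesis C_bounds :
  forall xi : 'rV[R]_3, al * dotv xi xi <= dotv (xi *m C) xi <= be * dotv xi xi.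
Implicit Types xi eta : 'rV[R]_3.

Lemma bounds_ub_gt0 : 0 < be.
Proof.
have /andP[lb ub] := C_bounds (const_mx 1).
have al0 := al_gt0; have := le_trans lb ub; rewrite dotvE !mxE; lra.
Qed.

Lemma bounds_unitmx : C \in unitmx.
Proof.
rewrite -row_free_unit; apply: inj_row_free => xi xiC0; apply/eqP.
have /andP[lb _] := C_bounds xi; rewrite xiC0 dotv0l pmulr_rle0 // in lb.
by rewrite -dotv_eq0 eq_le lb dotv_ge0.
Qed.

Lemma compliance_sym xi eta : compliance C xi eta = compliance C eta xi.
Proof. by rewrite /compliance dotv_mulmx trmx_inv C_sym dotvC. Qed.

Lemma invmx_sq_le_compliance xi :
  al * dotv (xi *m invmx C) (xi *m invmx C) <= compliance C xi xi.
Proof.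
have /andP[lb _] := C_bounds (xi *m invmx C).
by rewrite /compliance [X in _ <= X]dotvC; rewrite mulmxKV ?bounds_unitmx in lb.
Qed.

Lemma compliance_ge0 xi : 0 <= compliance C xi xi.
Proof.
apply: le_trans (invmx_sq_le_compliance xi).
by rewrite mulr_ge0 ?dotv_ge0 ?ltW.
Qed.

Lemma sq_le_compliance xi : dotv xi xi <= be * compliance C xi xi.
Proof.
set y := xi *m invmx C.
have yC : y *m C = xi by rewrite mulmxKV ?bounds_unitmx.
have xiCy : dotv (xi *m C) y = dotv xi xi by rewrite dotv_mulmx C_sym yC.
have := C_bounds (be *: y - xi); rewrite mulmxBl -scalemxAl yC => /andP[lb _].
have /andP[_ ub] := C_bounds xi.
have := mulr_ge0 (ltW al_gt0) (dotv_ge0 (be *: y - xi)).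
rewrite !(dotvBl, dotvBr, dotv_linE) xiCy (dotvC xi y) -/(compliance C xi xi) in lb *.
move=> sq0; have be0 := bounds_ub_gt0; rewrite -(ler_pM2l be0); nra.
Qed.

Lemma compliance_le_sq xi : al * compliance C xi xi <= dotv xi xi.
Proof.
have al0 := al_gt0; have := dotv_ge0 (al *: (xi *m invmx C) - xi).
have := invmx_sq_le_compliance xi.
rewrite !(dotvBl, dotvBr, dotv_linE) (dotvC xi) -/(compliance C xi xi); nra.
Qed.

End Compliance.

(** * Integrals along an edge *)

Section IntervalIntegrals.
Variable R : realType.
Local Notation mu := (@lebesgue_measure R).
Implicit Types (h x : R) (k : R -> R).

Definition integrable_on h k := mu.-integrable `[0, h] (EFin \o k).

Lemma Rint_cst x (c : R) : 0 <= x -> Rint 0 x (fun=> c) = c * x.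
Proof.
move=> x_ge0; rewrite /Defs.Rint Rintegral_cst //= lebesgue_measure_itv /= lte_fin.
case: ltP => [_|x_le0]; first by rewrite /= subr0.
by have -> : x = 0 by apply/eqP; rewrite eq_le x_le0 x_ge0.
Qed.

Lemma eq_Rint h k1 k2 : (forall x, 0 <= x <= h -> k1 x = k2 x) -> Rint 0 h k1 = Rint 0 h k2.
Proof. by move=> k12; apply: eq_Rintegral => x; rewrite inE /= in_itv => /k12. Qed.

Lemma RintB h k1 k2 : integrable_on h k1 -> integrable_on h k2 ->
  Rint 0 h (fun x => k1 x - k2 x) = Rint 0 h k1 - Rint 0 h k2.
Proof. exact: RintegralB. Qed.

Lemma RintZ h (c : R) k : integrable_on h k -> Rint 0 h (fun x => c * k x) = c * Rint 0 h k.
Proof. exact: RintegralZl. Qed.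

Lemma integrable_onB h k1 k2 : integrable_on h k1 -> integrable_on h k2 ->
  integrable_on h (fun x => k1 x - k2 x).
Proof. by move=> ik1 ik2; apply: (integrableB _ ik1 ik2). Qed.

Lemma integrable_onZ h (c : R) k : integrable_on h k -> integrable_on h (fun x => c * k x).
Proof.
move=> ik; rewrite /integrable_on (_ : EFin \o _ = (fun x => c%:E * (EFin \o k) x)%E).
  exact: integrableZl.
by apply/funext => x /=; rewrite EFinM.
Qed.

Lemma bounded_integrable_on h k : measurable_fun `[0, h] k ->
  (exists M, forall x, 0 <= x <= h -> `|k x| <= M) -> integrable_on h k.
Proof.
move=> mk [M kM]; apply: measurable_bounded_integrable => //.
  by rewrite /= lebesgue_measure_itv; case: ifP => _; rewrite ?ltry.
exists M; split; first by rewrite num_real.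
by move=> y My x; rewrite /= in_itv => /kM /le_trans; apply; apply: ltW.
Qed.

Lemma Rint_horner (a b : R) (p P : {poly R}) : a < b -> deriv P = p ->
  Rint a b (horner p) = P.[b] - P.[a].
Proof.
move=> lt_ab dP; rewrite /Defs.Rint /Rintegral (@continuous_FTC2 _ _ (horner P)) //=.
- by apply: derivable_within_continuous => x _; exact: derivable_horner.
- split.
  + by move=> x _; exact: derivable_horner.
  + exact/cvg_at_right_filter/continuous_horner.
  + exact/cvg_at_left_filter/continuous_horner.
- by move=> x _; rewrite -derive.derivE dP.
Qed.

Lemma Rint_affine_mul h (a b c d : R) : 0 < h ->
  Rint 0 h (fun x => (a + x * b) * (c + x * d)) =
  a * c * h + (a * d + b * c) * h ^+ 2 / 2 + b * d * h ^+ 3 / 3.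
Proof.
move=> h_gt0.
pose P : {poly R} := (a * c) *: 'X + ((a * d + b * c) / 2) *: 'X^2 + (b * d / 3) *: 'X^3.
rewrite (_ : (fun x => _) = horner (deriv P)); last first.
  apply/funext => x; rewrite /P !(derivD, derivZ, derivX, derivXn) !hornerE /=.
  by field; rewrite ?pnatr_eq0.
by rewrite (Rint_horner h_gt0 erefl) /P !hornerE /=; field; rewrite ?pnatr_eq0.
Qed.

End IntervalIntegrals.

Section EdgeInnerProduct.
Variable R : realType.
Implicit Types (h x : R) (f g : R -> 'rV[R]_3).

Lemma eq_ipe h f1 f2 g1 g2 : (forall x, 0 <= x <= h -> f1 x = f2 x) ->
  (forall x, 0 <= x <= h -> g1 x = g2 x) -> ipe h f1 g1 = ipe h f2 g2.
Proof.
by move=> f12 g12; apply: eq_bigr => i _; apply: eq_Rint => x hx; rewrite f12 ?g12.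
Qed.

Lemma ipe0r h f : 0 <= h -> ipe h f (fun=> 0) = 0.
Proof.
move=> h_ge0; rewrite /ipe big1 // => i _.
by under eq_fun do rewrite mxE mulr0; rewrite Rint_cst // mul0r.
Qed.

Lemma ipe_affine h f g (a b c d : 'rV[R]_3) : 0 < h ->
  (forall x, 0 <= x <= h -> f x = a + x *: b) ->
  (forall x, 0 <= x <= h -> g x = c + x *: d) ->
  ipe h f g = h * dotv a c + h ^+ 2 / 2 * (dotv a d + dotv b c) + h ^+ 3 / 3 * dotv b d.
Proof.
move=> h_gt0 fE gE; rewrite (eq_ipe fE gE) /ipe.
under eq_bigr => i _.
  rewrite (_ : (fun x => _) = fun x => (a 0 i + x * b 0 i) * (c 0 i + x * d 0 i)).
    by rewrite Rint_affine_mul //; over.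
  by apply/funext => x; rewrite !mxE.
by rewrite /dotv !big_ord_recr !big_ord0 /=; field; rewrite ?pnatr_eq0.
Qed.

Definition rv_integral h f : 'rV[R]_3 := \row_j Rint 0 h (fun x => f x 0 j).

Lemma ipe_cstr h f (c : 'rV[R]_3) : (forall j, integrable_on h (fun x => f x 0 j)) ->
  ipe h f (fun=> c) = dotv (rv_integral h f) c.
Proof.
by move=> fi; apply: eq_bigr => j _; rewrite mxE /Defs.Rint RintegralZr //; exact: fi.
Qed.

Lemma integrable_on_crossv h f (a : 'rV[R]_3) :
  (forall j, integrable_on h (fun x => f x 0 j)) ->
  forall j, integrable_on h (fun x => crossv a (f x) 0 j).
Proof.
move=> fi j; under eq_fun do rewrite crossv_ordS.
by apply: integrable_onB; apply: integrable_onZ; exact: fi.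
Qed.

Lemma rv_integral_crossv h f (a : 'rV[R]_3) :
  (forall j, integrable_on h (fun x => f x 0 j)) ->
  rv_integral h (fun x => crossv a (f x)) = crossv a (rv_integral h f).
Proof.
move=> fi; apply/rowP => j; rewrite crossv_ordS !mxE.
under eq_fun do rewrite crossv_ordS.
by rewrite RintB ?RintZ //; apply: integrable_onZ.
Qed.

End EdgeInnerProduct.

Section EdgeTestFunctions.
Variable R : realType.
Implicit Types (h x : R) (f : R -> 'rV[R]_3).

Lemma L2_bounded h f : (forall j, measurable_fun `[0, h] (fun x => f x 0 j)) ->
  (forall j, exists M, forall x, 0 <= x <= h -> `|f x 0 j| <= M) -> L2 h f.
Proof.
move=> mf bf j; split; first exact: mf.
apply: (@bounded_integrable_on _ h (fun x => f x 0 j ^+ 2)); first exact: measurable_funX.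
have [M fM] := bf j; exists (M * M) => x hx.
have := fM x hx; have := normr_ge0 (f x 0 j); rewrite normrX; nra.
Qed.

Lemma L2_integrable h f j : L2 h f -> integrable_on h (fun x => f x 0 j).
Proof.
move=> /(_ j) [mf f2i].
have : integrable_on h (fun x => 1 + f x 0 j ^+ 2).
  rewrite /integrable_on (_ : EFin \o _ = (EFin \o fun=> 1) \+ (fun x => (f x 0 j ^+ 2)%:E)).
    apply: integrableD => //; apply: bounded_integrable_on; first exact: measurable_cst.
    by exists 1 => x _; rewrite normr1.
  by apply/funext => x.
apply: le_integrable => //; first by apply/measurable_EFinP.
move=> x _; change (`|(f x 0 j)%:E| <= `|(1 + f x 0 j ^+ 2)%:E|)%E.
rewrite !abse_EFin lee_fin [X in _ <= X]ger0_norm ?addr_ge0 ?sqr_ge0 //.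
have := sqr_ge0 (`|f x 0 j| - 1); have := normr_ge0 (f x 0 j).
by rewrite -[f x 0 j ^+ 2]real_normK ?num_real //; nra.
Qed.

Lemma L2_cst h (c : 'rV[R]_3) : L2 h (fun=> c).
Proof. by apply: L2_bounded => j; [exact: measurable_cst | exists `|c 0 j|]. Qed.

Definition indic_rv x (i : 'I_3) : R -> 'rV[R]_3 :=
  fun t => \row_j ((j == i)%:R * \1_(`]-oo, x] : set R) t).

Lemma L2_indic_rv h x i : L2 h (indic_rv x i).
Proof.
rewrite /indic_rv; apply: L2_bounded => j.
  rewrite (_ : (fun t => _) = fun t => (j == i)%:R * \1_(`]-oo, x] : set R) t).
    by apply: measurable_funM; [exact: measurable_cst | exact: measurable_indic].
  by apply/funext => t; rewrite mxE.
exists 1 => t _; rewrite mxE indicE normrM.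
by case: (j == i); case: (t \in _); rewrite ?normr0 ?normr1 ?mul0r ?mul1r.
Qed.

Lemma ipe_indic_rv h x i f : 0 <= x <= h -> ipe h f (indic_rv x i) = Rint 0 x (fun t => f t 0 i).
Proof.
case/andP=> x_ge0 x_le_h; rewrite /ipe (bigD1 i) //= big1 ?addr0; last first.
  move=> j /negbTE j_neq_i; under eq_fun do rewrite mxE j_neq_i mul0r mulr0.
  by rewrite Rint_cst ?mul0r // (le_trans x_ge0).
rewrite /Defs.Rint; have -> : (`[0, x] : set R) = `[0, h] `&` `]-oo, x].
  apply/seteqP; split => t /=; rewrite !in_itv /=.
    by case/andP => t_ge0 t_le_x; rewrite t_ge0 t_le_x (le_trans t_le_x).
  by case=> /andP[-> _] ->.
rewrite Rintegral_mkcondr; apply: eq_Rintegral => t _.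
by rewrite patchE mxE eqxx mul1r indicE; case: (t \in _); rewrite ?mulr1 ?mulr0.
Qed.

Lemma H1d_cst h (c : 'rV[R]_3) : H1d h (fun=> c) (fun=> 0).
Proof.
split; first exact: L2_cst.
move=> x /andP[x_ge0 _] i; under eq_fun do rewrite mxE.
by rewrite Rint_cst // mul0r addr0.
Qed.

Lemma H1d_linear h (c : 'rV[R]_3) : H1d h (fun x => x *: c) (fun=> c).
Proof.
split; first exact: L2_cst.
by move=> x /andP[x_ge0 _] i; rewrite Rint_cst // !mxE mul0r add0r mulrC.
Qed.

End EdgeTestFunctions.

(** * The local solver on one edge *)

Section LocalSolver.
Variables (R : realType) (h : R) (ie : 'rV[R]_3) (Cn Cm : 'M[R]_3).
Variables (uk ul rk rl : 'rV[R]_3) (u r n m dn dm : R -> 'rV[R]_3).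
Hypotheses (h_gt0 : 0 < h) (r_L2 : L2 h r) (n_H1 : H1d h n dn) (m_H1 : H1d h m dm).
Hypothesis u_eq : forall p dp, H1d h p dp ->
  - ipe h (fun x => n x *m invmx Cn) p + ipe h u dp - ipe h (fun x => crossv ie (r x)) p
  = - dotv uk (p 0) + dotv ul (p h).
Hypothesis r_eq : forall q dq, H1d h q dq ->
  - ipe h (fun x => m x *m invmx Cm) q + ipe h r dq = - dotv rk (q 0) + dotv rl (q h).
Hypothesis n_eq : forall v, L2 h v -> ipe h dn v = 0.
Hypothesis m_eq : forall w, L2 h w -> ipe h (fun x => crossv ie (n x)) w + ipe h dm w = 0.

Local Notation J := (crossv ie (n 0)).

(* Testing against [indic_rv x i] turns the weak equations for n and m into
   pointwise ones. *)
Lemma local_sol_n_const x : 0 <= x <= h -> n x = n 0.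
Proof.
move=> hx; apply/rowP => i; rewrite (n_H1.2 x hx i).
by have := n_eq (L2_indic_rv h x i); rewrite ipe_indic_rv // => ->; rewrite addr0.
Qed.

Lemma local_sol_m_affine x : 0 <= x <= h -> m x = m 0 - x *: J.
Proof.
move=> hx; have /andP[x_ge0 x_le_h] := hx.
apply/rowP => i; rewrite (m_H1.2 x hx i).
have -> : (m 0 - x *: J) 0 i = m 0 0 i - x * J 0 i by rewrite !mxE.
have := m_eq (L2_indic_rv h x i); rewrite !ipe_indic_rv //.
rewrite (@eq_Rint _ x _ (fun=> J 0 i)) ?Rint_cst // => [|t /andP[t_ge0 t_le_x]]; first lra.
by rewrite local_sol_n_const // t_ge0 (le_trans t_le_x).
Qed.

Let m_Pm_affine x : 0 <= x <= h ->
  m x *m invmx Cm = m 0 *m invmx Cm + x *: - (J *m invmx Cm).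
Proof. by move=> hx; rewrite local_sol_m_affine // mulmxBl scalerN scalemxAl. Qed.

Let cst_affine (c : 'rV[R]_3) x : 0 <= x <= h -> c = c + x *: 0.
Proof. by rewrite scaler0 addr0. Qed.

Lemma local_sol_jump_r : rl - rk = - ((h *: m 0 - (h ^+ 2 / 2) *: J) *m invmx Cm).
Proof.
apply: dotv_inj => c; have := r_eq (H1d_cst h c).
rewrite ipe0r ?ltW // (ipe_affine h_gt0 m_Pm_affine (cst_affine c)).
rewrite mulmxBl -!scalemxAl !(dotvBl, dotv_linE); lra.
Qed.

Lemma local_sol_rv_integral_r :
  rv_integral h r = h *: rl + ((h ^+ 2 / 2) *: m 0 - (h ^+ 3 / 3) *: J) *m invmx Cm.
Proof.
apply: dotv_inj => c; have := r_eq (H1d_linear h c).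
rewrite (ipe_cstr _ (fun j => L2_integrable j r_L2)).
rewrite (ipe_affine (c := 0) (d := c) h_gt0 m_Pm_affine) => [|x _]; last by rewrite add0r.
rewrite mulmxBl -!scalemxAl !(dotvBl, dotv_linE); lra.
Qed.

Lemma local_sol_jump_u : ul - uk + h *: crossv ie rl =
  - (h *: (n 0 *m invmx Cn)) - crossv ie (((h ^+ 2 / 2) *: m 0 - (h ^+ 3 / 3) *: J) *m invmx Cm).
Proof.
have r_int := fun j => L2_integrable j r_L2.
have n_Pn_cst x : 0 <= x <= h -> n x *m invmx Cn = n 0 *m invmx Cn + x *: 0.
  by move=> hx; rewrite local_sol_n_const // scaler0 addr0.
apply: dotv_inj => c; have := u_eq (H1d_cst h c).
rewrite ipe0r ?ltW // (ipe_cstr _ (integrable_on_crossv ie r_int)) rv_integral_crossv //.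
rewrite local_sol_rv_integral_r (ipe_affine h_gt0 n_Pn_cst (cst_affine c)).
rewrite crossvDr crossvZr !(dotvBl, dotv_linE); lra.
Qed.

End LocalSolver.

Section EdgeEnergy.
Variables (R : realFieldType) (an bn am bm h : R) (ie : 'rV[R]_3) (Cn Cm : 'M[R]_3).
Variables (N M uk ul rk rl : 'rV[R]_3).
Hypotheses (an_gt0 : 0 < an) (am_gt0 : 0 < am) (h_gt0 : 0 < h) (ie_unit : dotv ie ie = 1).
Hypotheses (Cn_sym : Cn^T = Cn) (Cm_sym : Cm^T = Cm).
Hypothesis Cn_bounds :
  forall xi : 'rV[R]_3, an * dotv xi xi <= dotv (xi *m Cn) xi <= bn * dotv xi xi.
Hypothesis Cm_bounds :
  forall xi : 'rV[R]_3, am * dotv xi xi <= dotv (xi *m Cm) xi <= bm * dotv xi xi.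

Local Notation J := (crossv ie N).
Local Notation Y := ((h ^+ 2 / 2) *: M - (h ^+ 3 / 3) *: J).
Hypothesis jump_r : rl - rk = - ((h *: M - (h ^+ 2 / 2) *: J) *m invmx Cm).
Hypothesis jump_u :
  ul - uk + h *: crossv ie rl = - (h *: (N *m invmx Cn)) - crossv ie (Y *m invmx Cm).

Let W := - (dotv N (ul - uk) + dotv (M - h *: J) rl - dotv M rk).

Lemma edge_energy_jumps : W = - (dotv N (ul - uk) + dotv M (rl - rk) - h * dotv J rl).
Proof. by rewrite /W !(dotvBl, dotvBr, dotvZl); ring. Qed.

(* W is the compliance energy h C_n^-1 N·N + ∫_0^h C_m^-1 (M - xJ)·(M - xJ) dx. *)
Lemma edge_energyE : W = h * compliance Cn N N + h * compliance Cm M M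
  - h ^+ 2 * compliance Cm M J + h ^+ 3 / 3 * compliance Cm J J.
Proof.
have jump_u' : ul - uk = - (h *: (N *m invmx Cn)) - crossv ie (Y *m invmx Cm) - h *: crossv ie rl.
  by rewrite -jump_u addrK.
have dotv_N_crossv v : dotv N (crossv ie v) = - dotv J v.
  by rewrite dotv_crossvA crossvC dotvNl.
rewrite edge_energy_jumps jump_u' jump_r !(dotvBr, dotvNr, dotvZr) !dotv_N_crossv.
rewrite !(mulmxBl, dotvBr, dotvBl) -!scalemxAl !(dotvZr, dotvZl, dotvNr).
rewrite !(dotvC _ (_ *m _)) -!/(compliance _ _ _) (compliance_sym Cm_sym J M).
by field; rewrite ?pnatr_eq0.
Qed.

(* The m-part of the energy is bounded below through C_m^-1 (3M - 2hJ)·(3M - 2hJ) ≥ 0. *)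
Lemma edge_energy_ge : h * compliance Cn N N <= W /\ h * compliance Cm M M <= 4 * W.
Proof.
have := compliance_ge0 am_gt0 Cm_bounds (3 *: M - (2 * h) *: J).
rewrite /compliance mulmxBl -!scalemxAl !(dotvBl, dotvBr, dotv_linE).
rewrite -!/(compliance _ _ _) (compliance_sym Cm_sym J M) => mix.
have := mulr_ge0 (ltW h_gt0) mix.
have := mulr_ge0 (ltW h_gt0) (compliance_ge0 am_gt0 Cm_bounds M).
have := mulr_ge0 (ltW h_gt0) (compliance_ge0 an_gt0 Cn_bounds N).
rewrite edge_energyE => qN qM hmix; split; lra.
Qed.

Lemma edge_energy_ge0 : 0 <= W.
Proof.
apply: le_trans (proj1 edge_energy_ge).
by rewrite mulr_ge0 ?(ltW h_gt0) ?(compliance_ge0 an_gt0 Cn_bounds).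
Qed.

Lemma edge_energy_upper : h * W <= (2 * bn + 4 * bm) *
  (dotv (ul - uk) (ul - uk) + dotv (rl - rk) (rl - rk) + h ^+ 2 * dotv rl rl).
Proof.
set c := 2 * bn + 4 * bm.
have bn_gt0 := bounds_ub_gt0 an_gt0 Cn_bounds.
have bm_gt0 := bounds_ub_gt0 am_gt0 Cm_bounds.
have c_gt0 : 0 < c by rewrite /c; lra.
have [WN WM] := edge_energy_ge.
have h2_ge0 : 0 <= h ^+ 2 := sqr_ge0 h.
have N_le : h ^+ 2 * dotv N N <= bn * h * W.
  have := ler_wpM2l h2_ge0 (sq_le_compliance an_gt0 Cn_sym Cn_bounds N).
  have := ler_wpM2l (mulr_ge0 (ltW bn_gt0) (ltW h_gt0)) WN; lra.
have M_le : h ^+ 2 * dotv M M <= 4 * bm * h * W.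
  have := ler_wpM2l h2_ge0 (sq_le_compliance am_gt0 Cm_sym Cm_bounds M).
  have := ler_wpM2l (mulr_ge0 (ltW bm_gt0) (ltW h_gt0)) WM; lra.
have J_le : h ^+ 2 * dotv J J <= h ^+ 2 * dotv N N.
  exact: (ler_wpM2l h2_ge0 (dotv_crossv_le N ie_unit)).
set du := ul - uk; set dr := rl - rk.
have yu := dotv_young du (- (h *: N)) c.
have yr := dotv_young dr (- (h *: M)) c.
have yJ := dotv_young (h *: rl) (h *: J) c.
rewrite !(dotvNr, dotvZr, dotvNl, dotvZl, opprK) in yu yr yJ.
have cW : c * (h * W) = - c * h * (dotv N du + dotv M dr - h * dotv J rl).
  by rewrite edge_energy_jumps; ring.
have chW : c * (h * W) = 2 * (bn * h * W) + 4 * bm * h * W by rewrite /c; ring.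
rewrite (dotvC du) (dotvC dr) (dotvC rl) in yu yr yJ.
rewrite -(ler_pM2l c_gt0); lra.
Qed.

Local Notation PN := (N *m invmx Cn).
Local Notation PM := (M *m invmx Cm).
Local Notation PJ := (J *m invmx Cm).

Lemma edge_jumps_sq_le : h <= 1 ->
  dotv (rl - rk) (rl - rk)
    + dotv (ul - uk + h *: crossv ie rl) (ul - uk + h *: crossv ie rl)
  <= h ^+ 2 * (2 * dotv PN PN + 3 * dotv PM PM + dotv PJ PJ).
Proof.
move=> h_le1; have h_ge0 := ltW h_gt0.
have r_le : dotv (rl - rk) (rl - rk) <= 2 * h ^+ 2 * dotv PM PM + h ^+ 4 / 2 * dotv PJ PJ.
  rewrite jump_r dotvNl dotvNr opprK mulmxBl -!scalemxAl.
  have := dotv_sqD_le (h *: PM) (- ((h ^+ 2 / 2) *: PJ)).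
  rewrite !(dotvNl, dotvNr, dotvZl, dotvZr, opprK); lra.
have Y_le : dotv (Y *m invmx Cm) (Y *m invmx Cm)
    <= h ^+ 4 / 2 * dotv PM PM + 2 * h ^+ 6 / 9 * dotv PJ PJ.
  rewrite mulmxBl -!scalemxAl.
  have := dotv_sqD_le ((h ^+ 2 / 2) *: PM) (- ((h ^+ 3 / 3) *: PJ)).
  rewrite !(dotvNl, dotvNr, dotvZl, dotvZr, opprK); lra.
have u_le : dotv (ul - uk + h *: crossv ie rl) (ul - uk + h *: crossv ie rl)
    <= 2 * h ^+ 2 * dotv PN PN + 2 * dotv (Y *m invmx Cm) (Y *m invmx Cm).
  rewrite jump_u; have := dotv_sqD_le (- (h *: PN)) (- crossv ie (Y *m invmx Cm)).
  have := dotv_crossv_le (Y *m invmx Cm) ie_unit.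
  rewrite !(dotvNl, dotvNr, dotvZl, dotvZr, opprK); lra.
have := ler_wpM2r (dotv_ge0 PM) (@ler_wiXn2l _ h h_ge0 h_le1 4%N 2%N isT).
have := ler_wpM2r (dotv_ge0 PJ) (@ler_wiXn2l _ h h_ge0 h_le1 4%N 2%N isT).
have := ler_wpM2r (dotv_ge0 PJ) (@ler_wiXn2l _ h h_ge0 h_le1 6%N 2%N isT).
have := mulr_ge0 (sqr_ge0 h) (dotv_ge0 PJ); lra.
Qed.

Lemma edge_invmx_sq_le :
  [/\ an * (h * dotv PN PN) <= W, am * (h * dotv PM PM) <= 4 * W
    & am ^+ 2 * (h * dotv PJ PJ) <= bn * W].
Proof.
have h_ge0 := ltW h_gt0; have [WN WM] := edge_energy_ge.
split.
- by have := ler_wpM2l h_ge0 (invmx_sq_le_compliance an_gt0 Cn_bounds N); lra.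
- by have := ler_wpM2l h_ge0 (invmx_sq_le_compliance am_gt0 Cm_bounds M); lra.
have := ler_wpM2l (mulr_ge0 (ltW am_gt0) h_ge0) (invmx_sq_le_compliance am_gt0 Cm_bounds J).
have := ler_wpM2l h_ge0 (compliance_le_sq am_gt0 Cm_bounds J).
have := ler_wpM2l h_ge0 (dotv_crossv_le N ie_unit).
have := ler_wpM2l h_ge0 (sq_le_compliance an_gt0 Cn_sym Cn_bounds N).
have := ler_wpM2l (ltW (bounds_ub_gt0 an_gt0 Cn_bounds)) WN; lra.
Qed.

Lemma edge_energy_lower : h <= 1 ->
  dotv (rl - rk) (rl - rk)
    + dotv (ul - uk + h *: crossv ie rl) (ul - uk + h *: crossv ie rl)
  <= (2 / an + 12 / am + bn / am ^+ 2) * (h * W).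
Proof.
move=> h_le1; apply: le_trans (edge_jumps_sq_le h_le1) _.
have [yN_le yM_le yJ_le] := edge_invmx_sq_le.
have yN : h * dotv PN PN <= an^-1 * W by rewrite ler_pdivlMl.
have yM : h * dotv PM PM <= am^-1 * (4 * W) by rewrite ler_pdivlMl.
have yJ : h * dotv PJ PJ <= (am ^+ 2)^-1 * (bn * W) by rewrite ler_pdivlMl ?exprn_gt0.
rewrite (_ : _ * (h * W) = h * (2 * (an^-1 * W) + 3 * (am^-1 * (4 * W))
  + (am ^+ 2)^-1 * (bn * W))); last by field; rewrite !gt_eqF.
rewrite expr2 -mulrA; apply: ler_wpM2l; [exact: ltW | lra].
Qed.

End EdgeEnergy.

Lemma local_sol_energy_bounds (R : realType) (an bn am bm h : R) (ie : 'rV[R]_3)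
    (Cn Cm : 'M[R]_3) (uk ul rk rl : 'rV[R]_3) (u r n m : R -> 'rV[R]_3) :
  0 < an -> 0 < am -> 0 < h -> h <= 1 -> dotv ie ie = 1 ->
  Cn^T = Cn -> (forall xi, an * dotv xi xi <= dotv (xi *m Cn) xi <= bn * dotv xi xi) ->
  Cm^T = Cm -> (forall xi, am * dotv xi xi <= dotv (xi *m Cm) xi <= bm * dotv xi xi) ->
  local_sol h ie Cn Cm uk ul rk rl u r n m ->
  let W := - (dotv (n h) ul - dotv (n 0) uk + dotv (m h) rl - dotv (m 0) rk) in
  [/\ 0 <= W,
      h * W <= (2 * bn + 4 * bm) *
        (dotv (ul - uk) (ul - uk) + dotv (rl - rk) (rl - rk) + h ^+ 2 * dotv rl rl) &
      dotv (rl - rk) (rl - rk)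
        + dotv (ul - uk + h *: crossv ie rl) (ul - uk + h *: crossv ie rl)
      <= (2 / an + 12 / am + bn / am ^+ 2) * (h * W)].
Proof.
move=> an_gt0 am_gt0 h_gt0 h_le1 ie_unit Cn_sym Cn_bounds Cm_sym Cm_bounds.
case=> _ [r_L2 [dn [dm [n_H1 [m_H1 [u_eq [r_eq [n_eq m_eq]]]]]]]] W.
have h_in : 0 <= h <= h by rewrite ltW ?lexx.
have W_E : W = - (dotv (n 0) (ul - uk) + dotv (m 0 - h *: crossv ie (n 0)) rl - dotv (m 0) rk).
  rewrite /W (local_sol_n_const n_H1 n_eq h_in) (local_sol_m_affine n_H1 m_H1 n_eq m_eq h_in).
  by rewrite dotvBr; ring.
have jump_r := local_sol_jump_r h_gt0 n_H1 m_H1 r_eq n_eq m_eq.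
have jump_u := local_sol_jump_u h_gt0 r_L2 n_H1 m_H1 u_eq r_eq n_eq m_eq.
rewrite W_E; split.
- exact: edge_energy_ge0 an_gt0 am_gt0 h_gt0 Cm_sym Cn_bounds Cm_bounds jump_r jump_u.
- exact: edge_energy_upper an_gt0 am_gt0 h_gt0 ie_unit Cn_sym Cm_sym Cn_bounds Cm_bounds
    jump_r jump_u.
- exact: edge_energy_lower an_gt0 am_gt0 h_gt0 ie_unit Cn_sym Cm_sym Cn_bounds Cm_bounds
    jump_r jump_u h_le1.
Qed.

(** * Sums over the graph *)

Section IncidenceSums.
Variables (R : rcfType) (nN nE : nat) (pos : 'I_nN -> 'rV[R]_3).
Variable ends : 'I_nE -> 'I_nN * 'I_nN.
Hypothesis ends_neq : forall e, (ends e).1 != (ends e).2.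
Local Notation h := (edge_len pos ends).
Implicit Types mu : 'I_nN -> 'rV[R]_3.

Lemma sum_incident (V : nmodType) (F : 'I_nN -> 'I_nE -> V) :
  \sum_(a < nN) \sum_(e < nE | ((ends e).1 == a) || ((ends e).2 == a)) F a e =
  \sum_(e < nE) (F (ends e).1 e + F (ends e).2 e).
Proof.
under eq_bigr do rewrite big_mkcond.
rewrite exchange_big; apply: eq_bigr => e _ /=.
rewrite (bigD1 (ends e).1) //= eqxx (bigD1 (ends e).2) /=; last by rewrite eq_sym ends_neq.
rewrite eqxx orbT big1 ?addr0 // => a /andP[a1 a2].
by rewrite eq_sym (negbTE a1) eq_sym (negbTE a2).
Qed.

Lemma edge_len_ge0 e : 0 <= h e.
Proof. exact: sqrtr_ge0. Qed.

Lemma LformE mu : Lform pos ends mu mu =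
  \sum_(e < nE) dotv (mu (ends e).2 - mu (ends e).1) (mu (ends e).2 - mu (ends e).1) / h e.
Proof.
rewrite /Lform -big_distrr /= sum_incident big_distrr; apply: eq_bigr => e _ /=.
rewrite /other eqxx (negbTE (ends_neq e)) -[mu (ends e).1 - _]opprB dotvNl dotvNr opprK.
by move: (_ / h e) => y; field.
Qed.

Lemma MformE mu : Mform pos ends mu mu =
  \sum_(e < nE)
    h e * (dotv (mu (ends e).1) (mu (ends e).1) + dotv (mu (ends e).2) (mu (ends e).2)) / 2.
Proof.
rewrite /Mform -big_distrr /= sum_incident big_distrr; apply: eq_bigr => e _ /=.
by field.
Qed.

Lemma sum_len_sq_le_Mform mu :
  \sum_(e < nE) h e * dotv (mu (ends e).2) (mu (ends e).2) <= 2 * Mform pos ends mu mu.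
Proof.
rewrite MformE big_distrr; apply: ler_sum => e _ /=.
have := mulr_ge0 (edge_len_ge0 e) (dotv_ge0 (mu (ends e).1)); lra.
Qed.

Lemma Lform_ge0 mu : 0 <= Lform pos ends mu mu.
Proof. by rewrite LformE sumr_ge0 // => e _; rewrite divr_ge0 ?dotv_ge0 ?edge_len_ge0. Qed.

Lemma jumpn_dotv_sum (f0 fh : 'I_nE -> 'rV[R]_3) mu :
  \sum_(a < nN) dotv (jumpn ends f0 fh a) (mu a) =
  \sum_(e < nE) (dotv (fh e) (mu (ends e).2) - dotv (f0 e) (mu (ends e).1)).
Proof.
have dotv_suml (v : 'I_nE -> 'rV[R]_3) w : dotv (\sum_e v e) w = \sum_e dotv (v e) w.
  by apply: (big_morph (dotv^~ w)) => [x y|]; [exact: dotvDl | exact: dotv0l].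
have sum_pick (b : 'I_nN) (g : 'I_nN -> R) : \sum_(a < nN) (if b == a then g a else 0) = g b.
  by rewrite -big_mkcond /= (big_pred1 b) // => a; rewrite eq_sym.
under eq_bigr do rewrite /jumpn dotv_suml.
rewrite exchange_big; apply: eq_bigr => e _ /=.
under eq_bigr do rewrite dotvBl !(fun_if (dotv^~ _)) !dotv0l.
by rewrite sumrB !sum_pick.
Qed.

Lemma AformE (ND : {set 'I_nN}) (N0 Nh M0 Mh : 'I_nE -> 'rV[R]_3) lam phi :
  inV ND lam -> inV ND phi ->
  Aform ends ND N0 Nh M0 Mh lam phi =
  \sum_(e < nE) - (dotv (Nh e) (lam (ends e).2) - dotv (N0 e) (lam (ends e).1)
                  + dotv (Mh e) (phi (ends e).2) - dotv (M0 e) (phi (ends e).1)).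
Proof.
move=> lamV phiV; rewrite /Aform big_mkcond /=.
under eq_bigr => a _.
  rewrite (_ : (if _ then _ else _) =
    dotv (jumpn ends N0 Nh a) (lam a) + dotv (jumpn ends M0 Mh a) (phi a)); first over.
  by case: ifPn => // /negbNE aD; rewrite lamV // phiV // !dotv0r addr0.
rewrite big_split /= !jumpn_dotv_sum -big_split /= -sumrN.
by apply: eq_bigr => e _; rewrite addrA.
Qed.

End IncidenceSums.

Section DiscretePoincare.
Variables (R : realType) (nN nE : nat) (pos : 'I_nN -> 'rV[R]_3).
Variables (ends : 'I_nE -> 'I_nN * 'I_nN) (ND : {set 'I_nN}).
Hypotheses (ends_neq : forall e, (ends e).1 != (ends e).2)
  (edge_len_gt0 : forall e, 0 < edge_len pos ends e)
  (connected : forall a b, connect (adj ends) a b) (ND_neq0 : ND != finset.set0).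
Local Notation h := (edge_len pos ends).
Implicit Types mu : 'I_nN -> 'rV[R]_3.

Definition jump_sq_sum mu :=
  \sum_(e < nE) dotv (mu (ends e).2 - mu (ends e).1) (mu (ends e).2 - mu (ends e).1).

Lemma adj_jump_sq_le mu a b : adj ends a b ->
  dotv (mu b - mu a) (mu b - mu a) <= jump_sq_sum mu.
Proof.
have sq_ge0 e : 0 <= dotv (mu (ends e).2 - mu (ends e).1) (mu (ends e).2 - mu (ends e).1).
  exact: dotv_ge0.
case/existsP => e /orP[] /eqP ends_e; rewrite /jump_sq_sum (bigD1 e) //= ends_e /=.
  by rewrite lerDl sumr_ge0.
by rewrite -opprB dotvNl dotvNr opprK lerDl sumr_ge0.
Qed.

Lemma node_sq_le a : exists2 K, 0 <= K &
  forall mu, inV ND mu -> dotv (mu a) (mu a) <= K * jump_sq_sum mu.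
Proof.
case/set0Pn: ND_neq0 => d dD; case/connectP: (connected d a) => p + ->.
have : exists2 K, 0 <= K & forall mu, inV ND mu -> dotv (mu d) (mu d) <= K * jump_sq_sum mu.
  by exists 0 => // mu muV; rewrite muV // dotv0l mul0r.
elim: p d {dD} => [|y p IHp] x [K K_ge0 xK] /=; first by exists K.
case/andP => xy path_p.
apply: IHp path_p; exists (2 * K + 2) => [|mu muV]; first lra.
have := dotv_sqD_le (mu x) (mu y - mu x); rewrite addrC subrK.
have := adj_jump_sq_le mu xy; have := xK mu muV; lra.
Qed.

Lemma jump_sq_sum_le mu : jump_sq_sum mu <= (\sum_(e < nE) h e) * Lform pos ends mu mu.
Proof.
rewrite (LformE _ ends_neq) big_distrr; apply: ler_sum => e _ /=.
set d := dotv _ _; have h_gt0 := edge_len_gt0 e.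
rewrite {1}(_ : d = h e * (d / h e)); last by field; rewrite gt_eqF.
apply: ler_wpM2r; first by rewrite divr_ge0 ?dotv_ge0 ?ltW.
rewrite (bigD1 e) //= lerDl sumr_ge0 // => *; exact: edge_len_ge0.
Qed.

Lemma Mform_le_Lform : exists2 kap, 0 < kap &
  forall mu, inV ND mu -> Mform pos ends mu mu <= kap * Lform pos ends mu mu.
Proof.
have /choice [K nodeK] : forall a, exists K, 0 <= K /\
    forall mu, inV ND mu -> dotv (mu a) (mu a) <= K * jump_sq_sum mu.
  by move=> a; have [K K_ge0 aK] := node_sq_le a; exists K.
pose kap0 := \sum_(e < nE) h e * (K (ends e).1 + K (ends e).2) / 2.
pose H := \sum_(e < nE) h e.
have kap0_ge0 : 0 <= kap0.
  apply: sumr_ge0 => e _; have := (nodeK (ends e).1).1; have := (nodeK (ends e).2).1.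
  by move=> *; rewrite divr_ge0 // mulr_ge0 ?edge_len_ge0 ?addr_ge0.
have H_ge0 : 0 <= H by apply: sumr_ge0 => e _; exact: edge_len_ge0.
exists (kap0 * H + 1) => [|mu muV]; first by rewrite ltr_wpDl ?mulr_ge0.
have M_le : Mform pos ends mu mu <= kap0 * jump_sq_sum mu.
  rewrite (MformE _ ends_neq) /kap0 big_distrl; apply: ler_sum => e _ /=.
  have := ler_wpM2l (edge_len_ge0 pos ends e) ((nodeK (ends e).1).2 mu muV).
  have := ler_wpM2l (edge_len_ge0 pos ends e) ((nodeK (ends e).2).2 mu muV).
  lra.
have := ler_wpM2l kap0_ge0 (jump_sq_sum_le mu).
have := Lform_ge0 pos ends_neq mu; rewrite -/H; lra.
Qed.

Lemma Mform_gt0 mu : inV ND mu -> mu <> (fun=> 0) -> 0 < Mform pos ends mu mu.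
Proof.
move=> muV mu_neq0.
have [a mu_a] : exists a, mu a != 0.
  case/boolP: [exists a, mu a != 0] => [/existsP //|]; rewrite negb_exists => /forallP mu0.
  by case: mu_neq0; apply/funext => a; apply/eqP/negPn/mu0.
case/set0Pn: ND_neq0 => d dD.
have a_neq_d : a != d by apply: contraNneq mu_a => ->; rewrite muV.
case/connectP: (connected a d) => -[/= _ d_eq_a|y p /= /andP[/existsP [e ends_e] _] _].
  by rewrite d_eq_a eqxx in a_neq_d.
have term_ge0 e' : 0 <= h e' * (dotv (mu (ends e').1) (mu (ends e').1)
    + dotv (mu (ends e').2) (mu (ends e').2)) / 2.
  by rewrite divr_ge0 // mulr_ge0 ?edge_len_ge0 ?addr_ge0 ?dotv_ge0.
rewrite (MformE _ ends_neq) (bigD1 e) //=; apply: ltr_wpDr; first exact: sumr_ge0.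
rewrite divr_gt0 // mulr_gt0 //; have := dotv_gt0 mu_a.
by case/orP: ends_e => /eqP -> /= mu_a_gt0;
  [apply: ltr_pwDl | apply: ltr_pwDr]; rewrite ?dotv_ge0.
Qed.

Lemma Mform_le_lam_min mu : inV ND mu ->
  Mform pos ends mu mu <= `|(lam_min pos ends ND)^-1| * Lform pos ends mu mu.
Proof.
move=> muV; have L_ge0 := Lform_ge0 pos ends_neq mu.
case: (lerP (Mform pos ends mu mu) 0) => [M_le0|M_gt0].
  by apply: le_trans M_le0 _; rewrite mulr_ge0.
have mu_neq0 : mu <> (fun=> 0).
  move=> mu0; move: M_gt0; rewrite (MformE _ ends_neq) big1 ?ltxx // => e _.
  by rewrite mu0 !dotv0l addr0 mulr0 mul0r.
have [kap kap_gt0 MkL] := Mform_le_Lform.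
set E := [set Lform pos ends nu nu / Mform pos ends nu nu
         | nu in [set nu | inV ND nu /\ nu <> (fun=> 0)]].
have E_lb : lbound E kap^-1.
  move=> _ [nu [nuV nu_neq0] <-]; have Mnu_gt0 := Mform_gt0 nuV nu_neq0.
  by rewrite ler_pdivlMr // ler_pdivrMl //; exact: MkL.
have E_ne : nonempty E by exists (Lform pos ends mu mu / Mform pos ends mu mu), mu.
have kap_le : kap^-1 <= lam_min pos ends ND by apply: lb_le_inf.
have lam_le : lam_min pos ends ND <= Lform pos ends mu mu / Mform pos ends mu mu.
  by apply: ge_inf; [exists kap^-1 | exists mu].
have lam_gt0 : 0 < lam_min pos ends ND by apply: lt_le_trans kap_le; rewrite invr_gt0.
rewrite gtr0_norm ?invr_gt0 // ler_pdivlMl //.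
by rewrite ler_pdivlMr // in lam_le; lra.
Qed.

End DiscretePoincare.

Section EnergySums.
Variables (R : realType) (nN nE : nat) (pos : 'I_nN -> 'rV[R]_3).
Variables (ends : 'I_nE -> 'I_nN * 'I_nN) (dir : 'I_nE -> 'rV[R]_3).
Hypotheses (ends_neq : forall e, (ends e).1 != (ends e).2)
  (edge_len_gt0 : forall e, 0 < edge_len pos ends e)
  (dir_unit : forall e, dotv (dir e) (dir e) = 1).
Variables (c1 kap T : R) (lam phi : 'I_nN -> 'rV[R]_3) (W : 'I_nE -> R).
Hypotheses (c1_ge0 : 0 <= c1) (T_ge0 : 0 <= T).
Hypothesis phi_poincare : Mform pos ends phi phi <= T * Lform pos ends phi phi.
Local Notation h := (edge_len pos ends).
Local Notation dlam e := (lam (ends e).2 - lam (ends e).1).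
Local Notation dphi e := (phi (ends e).2 - phi (ends e).1).
Local Notation phi2 e := (phi (ends e).2).
Local Notation Z e := (dlam e + h e *: crossv (dir e) (phi2 e)).
Hypothesis W_upper : forall e, h e * W e <=
  c1 * (dotv (dlam e) (dlam e) + dotv (dphi e) (dphi e) + h e ^+ 2 * dotv (phi2 e) (phi2 e)).
Hypothesis W_lower :
  forall e, dotv (dphi e) (dphi e) + dotv (Z e) (Z e) <= kap * (h e * W e).

Lemma sum_energy_le_Lform :
  \sum_(e < nE) W e <= c1 * (1 + 2 * T) * (Lform pos ends lam lam + Lform pos ends phi phi).
Proof.
have sum_le : \sum_(e < nE) W e <= c1 * (Lform pos ends lam lam + Lform pos ends phi phi
    + \sum_(e < nE) h e * dotv (phi2 e) (phi2 e)).
  rewrite !(LformE _ ends_neq) -!big_split big_distrr; apply: ler_sum => e _ /=.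
  have h_gt0 := edge_len_gt0 e; rewrite -(ler_pM2l h_gt0).
  apply: le_trans (W_upper e) _; rewrite mulrCA ler_wpM2l // !mulrDr.
  by rewrite !mulrA !(mulrC (h e)) !mulfK ?gt_eqF // expr2 mulrA.
have S_le : \sum_(e < nE) h e * dotv (phi2 e) (phi2 e) <= 2 * (T * Lform pos ends phi phi).
  apply: le_trans (sum_len_sq_le_Mform pos ends_neq phi) _.
  by rewrite ler_pM2l.
have := ler_wpM2l c1_ge0 S_le.
have := mulr_ge0 (mulr_ge0 c1_ge0 T_ge0) (Lform_ge0 pos ends_neq lam); lra.
Qed.

Lemma Lform_le_sum_energy :
  Lform pos ends lam lam + Lform pos ends phi phi <= kap * (2 + 4 * T) * \sum_(e < nE) W e.
Proof.
have lam_edge e : dotv (dlam e) (dlam e)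
    <= 2 * dotv (Z e) (Z e) + 2 * (h e ^+ 2 * dotv (phi2 e) (phi2 e)).
  have := dotv_sqD_le (Z e) (- (h e *: crossv (dir e) (phi2 e))).
  have := dotv_crossv_le (phi2 e) (dir_unit e).
  rewrite addrK !(dotvNl, dotvNr, dotvZl, dotvZr, opprK) expr2; nra.
have phi_le : Lform pos ends phi phi <= kap * \sum_(e < nE) W e.
  rewrite (LformE _ ends_neq) big_distrr; apply: ler_sum => e _ /=.
  have h_gt0 := edge_len_gt0 e; rewrite ler_pdivrMr // -mulrA [W e * _]mulrC.
  have := W_lower e; have := dotv_ge0 (Z e); lra.
have sum_le : Lform pos ends lam lam + Lform pos ends phi phi <= 2 * kap * \sum_(e < nE) W e
    + 2 * \sum_(e < nE) h e * dotv (phi2 e) (phi2 e).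
  rewrite !(LformE _ ends_neq) -big_split !big_distrr -big_split; apply: ler_sum => e _ /=.
  have h_gt0 := edge_len_gt0 e; rewrite -mulrDl ler_pdivrMr //.
  have := W_lower e; have := lam_edge e.
  have -> : (2 * kap * W e + 2 * (h e * dotv (phi2 e) (phi2 e))) * h e
    = 2 * (kap * (h e * W e)) + 2 * (h e ^+ 2 * dotv (phi2 e) (phi2 e)) by ring.
  have := dotv_ge0 (dphi e); lra.
have S_le : \sum_(e < nE) h e * dotv (phi2 e) (phi2 e) <= 2 * (T * (kap * \sum_(e < nE) W e)).
  apply: le_trans (sum_len_sq_le_Mform pos ends_neq phi) _.
  by rewrite ler_pM2l // (le_trans phi_poincare) // ler_wpM2l.
lra.
Qed.

End EnergySums.

Section GraphOk.
Variables (R : rcfType) (nN nE : nat) (pos : 'I_nN -> 'rV[R]_3).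
Variable ends : 'I_nE -> 'I_nN * 'I_nN.
Hypothesis graph : graph_ok pos ends.

Lemma graph_ok_ends_neq e : (ends e).1 != (ends e).2.
Proof. by case: graph => _ [_ [ends_lt _]]; rewrite neq_ltn ends_lt. Qed.

Lemma graph_ok_edge_sq_gt0 e :
  0 < dotv (pos (ends e).2 - pos (ends e).1) (pos (ends e).2 - pos (ends e).1).
Proof.
case: graph => pos_inj _; apply: dotv_gt0; rewrite subr_eq0.
by apply: contra (graph_ok_ends_neq e) => /eqP /pos_inj ->.
Qed.

Lemma graph_ok_edge_len_gt0 e : 0 < edge_len pos ends e.
Proof. by rewrite sqrtr_gt0 graph_ok_edge_sq_gt0. Qed.

Lemma graph_ok_edge_dir_unit e : dotv (edge_dir pos ends e) (edge_dir pos ends e) = 1.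
Proof.
rewrite /edge_dir dotvZl dotvZr mulrA -expr2 exprVn /edge_len /normv.
by rewrite sqr_sqrtr ?mulVf ?gt_eqF ?graph_ok_edge_sq_gt0 ?dotv_ge0.
Qed.

End GraphOk.

Theorem theorem5p1 (R : realType) (an bn am bm : R) :
  0 < an -> 0 < bn -> 0 < am -> 0 < bm ->
  exists (h0 c : R -> R), (forall t, 0 < h0 t) /\
  forall (nN nE : nat) (pos : 'I_nN -> 'rV[R]_3) (ends : 'I_nE -> 'I_nN * 'I_nN)
         (ND : {set 'I_nN}) (Cn Cm : 'I_nE -> 'M[R]_3),
    graph_ok pos ends -> ND != finset.set0 ->
    (forall e, coef_ok an bn (edge_dir pos ends e) (Cn e)) ->
    (forall e, coef_ok am bm (edge_dir pos ends e) (Cm e)) ->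
    (forall e, edge_len pos ends e <= h0 (lam_min pos ends ND)^-1) ->
    forall lam phi : 'I_nN -> 'rV[R]_3, inV ND lam -> inV ND phi ->
    forall u r n m : 'I_nE -> R -> 'rV[R]_3,
    (forall e, local_sol (edge_len pos ends e) (edge_dir pos ends e) (Cn e) (Cm e)
                 (lam (ends e).1) (lam (ends e).2) (phi (ends e).1) (phi (ends e).2)
                 (u e) (r e) (n e) (m e)) ->
    let A := Aform ends ND (fun e => n e 0) (fun e => n e (edge_len pos ends e))
                           (fun e => m e 0) (fun e => m e (edge_len pos ends e)) lam phi in
    let LL := Lform pos ends lam lam + Lform pos ends phi phi in
    LL <= c (lam_min pos ends ND)^-1 * A /\ A <= c (lam_min pos ends ND)^-1 * LL.
Proof.
move=> an_gt0 bn_gt0 am_gt0 bm_gt0.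
set c1 := 2 * bn + 4 * bm; set kap := 2 / an + 12 / am + bn / am ^+ 2.
have c1_ge0 : 0 <= c1 by rewrite /c1; lra.
have kap_ge0 : 0 <= kap by rewrite /kap !addr_ge0 ?divr_ge0 ?exprn_ge0 ?ltW.
exists (fun=> 1), (fun t => (c1 + kap) * (2 + 4 * `|t|)); split=> [//|].
move=> nN nE pos ends ND Cn Cm graph ND_neq0 Cn_ok Cm_ok h_le1 lam phi lamV phiV u r n m sol A LL.
have len_gt0 := graph_ok_edge_len_gt0 graph; have ends_neq := graph_ok_ends_neq graph.
have edge e := local_sol_energy_bounds an_gt0 am_gt0 (len_gt0 e) (h_le1 e)
  (graph_ok_edge_dir_unit graph e) (Cn_ok e).1 (Cn_ok e).2.1 (Cm_ok e).1 (Cm_ok e).2.1 (sol e).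
have T_ge0 := normr_ge0 (lam_min pos ends ND)^-1.
have poincare := Mform_le_lam_min ends_neq len_gt0 graph.2.2.2 ND_neq0 phiV.
set W := fun e => - (dotv (n e (edge_len pos ends e)) (lam (ends e).2)
    - dotv (n e 0) (lam (ends e).1) + dotv (m e (edge_len pos ends e)) (phi (ends e).2)
    - dotv (m e 0) (phi (ends e).1)).
have A_E : A = \sum_(e < nE) W e by rewrite /A AformE.
have A_ge0 : 0 <= \sum_(e < nE) W e by apply: sumr_ge0 => e _; case: (edge e).
have A_le := @sum_energy_le_Lform _ _ _ pos ends ends_neq len_gt0 c1 _ lam phi W
  c1_ge0 T_ge0 poincare (fun e => let: And3 _ W_up _ := edge e in W_up).
have LL_le := @Lform_le_sum_energy _ _ _ pos ends _ ends_neq len_gt0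
  (graph_ok_edge_dir_unit graph) kap _ lam phi W T_ge0 poincare
  (fun e => let: And3 _ _ W_lo := edge e in W_lo).
rewrite -/LL -A_E in A_le LL_le A_ge0.
have LL_ge0 : 0 <= LL by rewrite addr_ge0 ?(Lform_ge0 pos ends_neq).
have := mulr_ge0 c1_ge0 T_ge0; have := mulr_ge0 kap_ge0 T_ge0.
by split; [apply: le_trans LL_le _ | apply: le_trans A_le _]; apply: ler_wpM2r => //; lra.
Qed.
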